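(* Let $G=(V,E,w)$ be a finite undirected graph with positive vertex weights and let $IS$ and $S$ be independent sets of $G$. (a) Suppose there is $I_w\in A_I$ with $IS\subseteq I_w$. If $IS'\subseteq N(IS)$ is an independent set with $w(IS')>w(IS\cap N(IS'))$, then there exists an independent set $IS''\subseteq N(IS')\setminus N[IS]$ such that $w(IS')\le w(IS\cap N(IS'))+w(IS'')$. Moreover, if there is exactly one independent set $IS''\subseteq N(IS')\setminus N[IS]$ satisfying this inequality, then $IS\cup IS''\subseteq I_w$. (b) Suppose $S$ is contained in every MWIS of $G$. Then for every nonempty independent set $S'\subseteq N(S)$ there is an independent set $S''\subseteq N(S')\setminus N[S]$ such that $w(S')<w(S\cap N(S'))+w(S'')$. Moreover, if there is exactly one independent set $S''\subseteq N(S')\setminus N[S]$ satisfying this strict inequality, then $S\cup S''$ is contained in every MWIS of $G$.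
   Context: $G=(V,E,w)$ is a finite simple undirected graph with $w:V\to\mathbb{R}^{+}$. For $S\subseteq V$, $w(S)=\sum_{v\in S}w(v)$ (so $w(\emptyset)=0$). Independent sets are sets of pairwise non-adjacent vertices; the empty set is independent. A MWIS is an independent set of maximum total weight; $A_I$ is the set of all MWISs. $N(S)=\big(\bigcup_{v\in S}N(v)\big)\setminus S$ and $N[S]=N(S)\cup S$. *)

(* A finite simple undirected graph is a symmetric,
   irreflexive relation e on a finType T; vertex weights w : T -> R. *)
From mathcomp Require Import all_boot all_order all_algebra.
Set Implicit Arguments. Unset Strict Implicit. Unset Printing Implicit Defensive.
Import Order.TTheory GRing.Theory Num.Theory.
Local Open Scope ring_scope.

Definition independent (T : finType) (e : rel T) (S : {set T}) : bool :=
  [forall x in S, forall y in S, ~~ e x y].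

Definition wt (R : numDomainType) (T : finType) (w : T -> R) (S : {set T}) : R :=
  \sum_(x in S) w x.

(* I is a maximum weight independent set (I \in A_I) *)
Definition is_MWIS (R : numDomainType) (T : finType) (e : rel T) (w : T -> R)
  (I : {set T}) : Prop :=
  independent e I /\ forall J : {set T}, independent e J -> wt w J <= wt w I.

Definition nbh (T : finType) (e : rel T) (S : {set T}) : {set T} :=
  [set y | [exists x in S, e x y]] :\: S.

Definition cnbh (T : finType) (e : rel T) (S : {set T}) : {set T} :=
  nbh e S :|: S.

From mathcomp Require Import all_boot all_order all_algebra.
Set Implicit Arguments. Unset Strict Implicit. Unset Printing Implicit Defensive.
Import Order.TTheory GRing.Theory Num.Theory.
Local Open Scope ring_scope.

(* Both parts of the theorem rest on one exchange argument.  Let I be a MWIS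
   containing an independent set S, and let S' be an independent subset of
   N(S).  Put X := (I ∩ N(S')) \ N[S].  Since I avoids N(S), the vertices of
   I inside N(S') are exactly those of S ∩ N(S') together with X, so
     w(I) = w(I \ N(S')) + w(S ∩ N(S')) + w(X).
   Swapping I ∩ N(S') for S' yields the independent set (I \ N(S')) ∪ S' of
   weight w(I \ N(S')) + w(S'); maximality of I gives
     w(S') <= w(S ∩ N(S')) + w(X),
   and equality makes the swapped set a MWIS as well.  Moreover S ∪ X ⊆ I.
   Part (a) takes X as the witness; uniqueness forces the given IS'' to be X.
   For part (b), if equality held then the swapped set would be a MWIS not
   containing the neighbour in S of any vertex of S' ≠ ∅, contradicting the
   hypothesis that S lies in every MWIS; hence the inequality is strict. *)

Section Independence.
Variables (T : finType) (e : rel T).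

Lemma independentP (A : {set T}) :
  reflect (forall x y, x \in A -> y \in A -> ~~ e x y) (independent e A).
Proof.
apply: (iffP forallP) => [indA x y xA yA | indA x].
  by move: (indA x); rewrite xA => /forall_inP /(_ y yA).
by apply/implyP => xA; apply/forall_inP => y yA; apply: indA.
Qed.

Lemma independent_subset (A B : {set T}) :
  A \subset B -> independent e B -> independent e A.
Proof.
move=> /subsetP AB /independentP indB; apply/independentP => x y xA yA.
by apply: indB; apply: AB.
Qed.

Lemma nbhP (S : {set T}) (y : T) :
  y \in nbh e S -> exists2 x, x \in S & e x y.
Proof. by rewrite inE => /andP [_]; rewrite inE => /exists_inP. Qed.

Lemma MWIS_exists (R : realDomainType) (w : T -> R) : exists I, is_MWIS e w I.
Proof.
have ind0 : independent e set0 by apply/independentP => x y; rewrite inE.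
case: (@arg_maxP _ _ _ set0 (independent e) (wt w) ind0) => I indI maxI.
by exists I; split => // J indJ; apply: maxI.
Qed.

End Independence.

Lemma wt_setID (R : numDomainType) (T : finType) (w : T -> R) (A B : {set T}) :
  wt w A = wt w (A :&: B) + wt w (A :\: B).
Proof. by rewrite /wt (big_setID B). Qed.

Section Exchange.
Variables (R : numDomainType) (T : finType) (e : rel T) (w : T -> R).
Hypothesis e_sym : symmetric e.
Variables (I S S' : {set T}).
Hypotheses (I_MWIS : is_MWIS e w I) (S_sub_I : S \subset I).
Hypotheses (S'_sub_nbh : S' \subset nbh e S) (S'_indep : independent e S').

Definition exchange_part : {set T} := (I :&: nbh e S') :\: cnbh e S.

Definition swapped : {set T} := (I :\: nbh e S') :|: S'.

Let I_indep : independent e I. Proof. by case: I_MWIS. Qed.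

Lemma MWIS_avoids_nbh x : x \in I -> x \notin nbh e S.
Proof.
move=> xI; apply/negP => /nbhP [y yS eyx].
by move/independentP: I_indep => /(_ y x (subsetP S_sub_I y yS) xI); rewrite eyx.
Qed.

Lemma S'_disjoint_I x : x \in S' -> x \notin I.
Proof.
move=> xS'; apply: contraL (subsetP S'_sub_nbh x xS') => xI.
exact: MWIS_avoids_nbh.
Qed.

Lemma swapped_independent : independent e swapped.
Proof.
have cross x y : x \in I :\: nbh e S' -> y \in S' -> ~~ e x y.
  rewrite !inE negb_and negbK => /andP [/orP [xS' | xN] xI] yS'.
    by move: (S'_disjoint_I xS'); rewrite xI.
  by apply: contra xN => exy; apply/exists_inP; exists y; rewrite // e_sym.
apply/independentP => x y; rewrite [x \in _]inE [y \in _]inE.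
case/orP => [xI | xS'] /orP [yI | yS'].
- by move/independentP: I_indep; apply; [case/setDP: xI | case/setDP: yI].
- exact: cross.
- by rewrite e_sym; apply: cross.
- by move/independentP: S'_indep; apply.
Qed.

Lemma wt_swapped : wt w swapped = wt w (I :\: nbh e S') + wt w S'.
Proof.
rewrite addrC (wt_setID w swapped S'); congr (wt w _ + wt w _).
  by apply/setIidPr; apply: subsetUr.
apply/setP => x; rewrite !inE; case xS': (x \in S'); last by rewrite orbF.
by rewrite (negbTE (S'_disjoint_I xS')).
Qed.

Lemma wt_MWIS_split :
  wt w I = wt w (I :\: nbh e S') + wt w (S :&: nbh e S') + wt w exchange_part.
Proof.
have core : (I :&: nbh e S') :&: cnbh e S = S :&: nbh e S'.
  apply/setP => x; rewrite /cnbh !in_setI in_setU.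
  case xS: (x \in S); first by rewrite (subsetP S_sub_I x xS) orbT andbT.
  rewrite orbF; case xI: (x \in I) => //=.
  by rewrite (negbTE (MWIS_avoids_nbh xI)) andbF.
rewrite (wt_setID w I (nbh e S')) (wt_setID w (I :&: nbh e S') (cnbh e S)) core.
by rewrite addrC addrA.
Qed.

Lemma exchange_part_sub : exchange_part \subset nbh e S' :\: cnbh e S.
Proof. by apply: setSD; apply: subsetIr. Qed.

Lemma exchange_part_independent : independent e exchange_part.
Proof.
by apply: (independent_subset _ I_indep); apply: subset_trans (subsetDl _ _) _;
  apply: subsetIl.
Qed.

(* Maximality of I against the swapped set. *)
Lemma exchange_bound : wt w S' <= wt w (S :&: nbh e S') + wt w exchange_part.
Proof.
case: I_MWIS => _ maxI.
by move: (maxI _ swapped_independent); rewrite wt_swapped wt_MWIS_split -addrA lerD2l.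
Qed.

Lemma exchange_tight :
  wt w S' = wt w (S :&: nbh e S') + wt w exchange_part -> is_MWIS e w swapped.
Proof.
move=> tight; split; first exact: swapped_independent.
case: I_MWIS => _ maxI J indJ.
by rewrite wt_swapped tight addrA -wt_MWIS_split; apply: maxI.
Qed.

Lemma exchange_part_in_MWIS : S :|: exchange_part \subset I.
Proof.
by rewrite subUset S_sub_I; apply: subset_trans (subsetDl _ _) (subsetIl _ _).
Qed.

End Exchange.

(* If S lies in every MWIS and S' ⊆ N(S) is nonempty, the bound is strict:
   in the tight case the swapped MWIS would contain a vertex of S' and its
   neighbour in S. *)
Lemma exchange_strict (R : numDomainType) (T : finType) (e : rel T) (w : T -> R)
    (e_sym : symmetric e) (I S S' : {set T}) :
  (forall J, is_MWIS e w J -> S \subset J) -> is_MWIS e w I ->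
  S' != set0 -> S' \subset nbh e S -> independent e S' ->
  wt w S' < wt w (S :&: nbh e S') + wt w (exchange_part e I S S').
Proof.
move=> S_in_all I_MWIS S'_nonempty S'_sub S'_indep.
have S_sub_I := S_in_all I I_MWIS.
rewrite lt_neqAle (exchange_bound e_sym I_MWIS) // andbT.
apply/negP => /eqP tight.
have swap_MWIS := exchange_tight e_sym I_MWIS S_sub_I S'_sub S'_indep tight.
have S_sub_swap := S_in_all _ swap_MWIS; case: swap_MWIS => swap_indep _.
case/set0Pn: S'_nonempty => x xS'.
have [y yS eyx] := nbhP (subsetP S'_sub x xS').
move/independentP: swap_indep => /(_ y x (subsetP S_sub_swap y yS)).
by rewrite eyx inE xS' orbT => /(_ isT).
Qed.

Theorem theorem2p2 (R : realFieldType) (T : finType) (e : rel T) (w : T -> R)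
  (e_sym : symmetric e) (e_irr : irreflexive e) (w_pos : forall v, 0 < w v)
  (IS S : {set T}) (hIS : independent e IS) (hS : independent e S) :
  (* (a) *)
  (forall Iw : {set T}, is_MWIS e w Iw -> IS \subset Iw ->
   forall IS' : {set T}, IS' \subset nbh e IS -> independent e IS' ->
     wt w (IS :&: nbh e IS') < wt w IS' ->
     (exists IS'' : {set T},
        [/\ IS'' \subset nbh e IS' :\: cnbh e IS, independent e IS'' &
            wt w IS' <= wt w (IS :&: nbh e IS') + wt w IS'']) /\
     (forall IS'' : {set T},
        [/\ IS'' \subset nbh e IS' :\: cnbh e IS, independent e IS'' &
            wt w IS' <= wt w (IS :&: nbh e IS') + wt w IS''] ->
        (forall J : {set T},
           [/\ J \subset nbh e IS' :\: cnbh e IS, independent e J &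
               wt w IS' <= wt w (IS :&: nbh e IS') + wt w J] -> J = IS'') ->
        IS :|: IS'' \subset Iw))
  /\
  (* (b) *)
  ((forall I : {set T}, is_MWIS e w I -> S \subset I) ->
   forall S' : {set T}, S' != set0 -> S' \subset nbh e S -> independent e S' ->
     (exists S'' : {set T},
        [/\ S'' \subset nbh e S' :\: cnbh e S, independent e S'' &
            wt w S' < wt w (S :&: nbh e S') + wt w S'']) /\
     (forall S'' : {set T},
        [/\ S'' \subset nbh e S' :\: cnbh e S, independent e S'' &
            wt w S' < wt w (S :&: nbh e S') + wt w S''] ->
        (forall J : {set T},
           [/\ J \subset nbh e S' :\: cnbh e S, independent e J &
               wt w S' < wt w (S :&: nbh e S') + wt w J] -> J = S'') ->
        forall I : {set T}, is_MWIS e w I -> S :|: S'' \subset I)).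
Proof.
split.
  move=> Iw Iw_MWIS IS_sub IS' IS'_sub IS'_indep _.
  have witness := And3 (exchange_part_sub e Iw IS IS')
    (exchange_part_independent IS IS' Iw_MWIS)
    (exchange_bound e_sym Iw_MWIS IS_sub IS'_sub IS'_indep).
  split; first by exists (exchange_part e Iw IS IS').
  move=> IS'' _ unique; rewrite -(unique _ witness).
  exact: exchange_part_in_MWIS.
move=> S_in_all S' S'_nonempty S'_sub S'_indep.
have witness I (I_MWIS : is_MWIS e w I) := And3 (exchange_part_sub e I S S')
  (exchange_part_independent S S' I_MWIS)
  (exchange_strict e_sym S_in_all I_MWIS S'_nonempty S'_sub S'_indep).
split.
  have [I I_MWIS] := MWIS_exists e w.
  by exists (exchange_part e I S S'); apply: witness.
move=> S'' _ unique I I_MWIS; rewrite -(unique _ (witness I I_MWIS)).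
exact: (exchange_part_in_MWIS _ _ (S_in_all I I_MWIS)).
Qed.
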